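(* Let $(X,d)$, $T$, $c$, $l$, $\alpha$ and $\rho$ be as follows: $(X,d)$ is a compact metric space, $T:\mathbb{Z}^k\times X\to X$ a continuous action, $c>0$ such that distinct $x,y$ satisfy $\sup_{u\in\mathbb{Z}^k}d(T^ux,T^uy)>c$, $l>0$ an integer such that $d(x,y)\geq c/2$ implies $d(T^ux,T^uy)\geq c$ for some $|u|\leq l$, $\alpha>1$ with $\alpha^l<2$, $\mathbf{n}(x,y)=\min\{n\geq0:\exists u\in\mathbb{Z}^k,|u|\leq n, d(T^ux,T^uy)\geq c\}$ ($=\infty$ if $x=y$), $\rho(x,y)=\alpha^{-\mathbf{n}(x,y)}$. Let $D$ be a distance function on $X$ with $\rho(x,y)/4\leq D(x,y)\leq\rho(x,y)$ for all $x,y$. If $n\geq1$ and $x,y\in X$ satisfy $\max_{u\in\mathbb{Z}^k,|u|<n}D(T^ux,T^uy)<1/(4\alpha)$, then $D(x,y)<\alpha^{-n}$.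
   Context: $|u|$ denotes the norm of $u\in\mathbb{Z}^k$ (a fixed norm, e.g. Euclidean). *)

From HB Require Import structures.
From mathcomp Require Import all_boot all_order all_algebra.
From mathcomp Require Import all_classical all_reals all_analysis.
Set Implicit Arguments. Unset Strict Implicit. Unset Printing Implicit Defensive.
Import Order.TTheory GRing.Theory Num.Theory.
Local Open Scope ring_scope.

Definition znorm (R : realType) (k : nat) (u : 'rV[int]_k) : R :=
  Num.sqrt (\sum_(i < k) ((u ord0 i)%:~R) ^+ 2).

Definition is_cont_action (R : realType) (X : metricType R) (k : nat)
  (T : 'rV[int]_k -> X -> X) : Prop :=
  (forall x, T 0 x = x) /\
  (forall u v x, T (u + v) x = T u (T v x)) /\
  (forall u, continuous (T u)).

Definition is_distance (X : Type) (R : realType) (D : X -> X -> R) : Prop :=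
  (forall x y, 0 <= D x y) /\ (forall x y, D x y = 0 <-> x = y) /\
  (forall x y, D x y = D y x) /\ (forall x y z, D x z <= D x y + D y z).

Definition sep_at (R : realType) (X : metricType R) (k : nat)
  (T : 'rV[int]_k -> X -> X) (c : R) (x y : X) (n : nat) : Prop :=
  exists u : 'rV[int]_k, znorm R u <= n%:R /\ c <= mdist (T u x) (T u y).

(* rho(x,y) = alpha^(-n(x,y)), with n(x,y) = min{n | sep_at n}, and
   rho = alpha^(-oo) = 0 when no such n exists (e.g. x = y). *)
Definition rho (R : realType) (X : metricType R) (k : nat)
  (T : 'rV[int]_k -> X -> X) (c alpha : R) (x y : X) : R :=
  match pselect (exists n, sep_at T c x y n) with
  | left h => alpha ^- (ex_minn (P := fun n => `[< sep_at T c x y n >])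
                         (let: ex_intro n hn := h in
                          ex_intro _ n (asboolT hn)))
  | right _ => 0
  end.

From HB Require Import structures.
From mathcomp Require Import all_boot all_order all_algebra.
From mathcomp Require Import all_classical all_reals all_analysis.
From mathcomp Require Import zify.
Import Order.TTheory GRing.Theory Num.Theory.
Local Open Scope ring_scope.

(* If D(x, y) >= alpha^-n then rho(x, y) >= alpha^-n, so some u with |u| <= n
   separates x and y. Peeling a unit step w off u leaves v = u - w with
   |v| < n, since |v|^2 <= |u|^2 - 1 for integer vectors. The points T^v x and
   T^v y are separated at time w, |w| <= 1, so their rho is at least 1/alpha
   and their D at least 1/(4 alpha), contradicting the hypothesis at v. *)

Definition zsqnorm {k : nat} (u : 'rV[int]_k) : int := \sum_(i < k) u ord0 i ^+ 2.

Section IntegerNorm.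
Set Implicit Arguments.
Unset Strict Implicit.
Variables (R : realType) (k : nat).
Implicit Types (u : 'rV[int]_k) (n : nat).

Lemma zsqnorm_ge0 u : 0 <= zsqnorm u.
Proof. by apply: sumr_ge0 => i _; rewrite sqr_ge0. Qed.

Lemma znormE u : znorm R u = Num.sqrt (zsqnorm u)%:~R.
Proof.
rewrite /znorm /zsqnorm rmorph_sum; congr Num.sqrt; apply: eq_bigr => i _.
by rewrite rmorphXn.
Qed.

Lemma nat_sqrtE n : n%:R = Num.sqrt ((n%:Z ^+ 2)%:~R : R).
Proof. by rewrite rmorphXn /= sqrtr_sqr pmulrn normr_nat. Qed.

Lemma znorm_le_nat u n : (znorm R u <= n%:R) = (zsqnorm u <= n%:Z ^+ 2).
Proof. by rewrite znormE nat_sqrtE ler_sqrt ?ler_int // ler0z exprn_ge0. Qed.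

Lemma znorm_lt_nat u n : (znorm R u < n%:R) = (zsqnorm u < n%:Z ^+ 2).
Proof. by rewrite !ltNge znormE nat_sqrtE ler_sqrt ?ler_int // ler0z zsqnorm_ge0. Qed.

Lemma znorm_le1 u : (znorm R u <= 1) = (zsqnorm u <= 1).
Proof. exact: znorm_le_nat u 1. Qed.

Lemma zsqnorm0 : zsqnorm (0 : 'rV[int]_k) = 0.
Proof. by rewrite /zsqnorm big1 // => i _; rewrite mxE expr0n. Qed.

Lemma zsqnorm_unit_step u : u != 0 ->
  exists w, zsqnorm w = 1 /\ zsqnorm (u - w) < zsqnorm u.
Proof.
move=> u_neq0; have [i ui0] : exists i, u ord0 i != 0.
  apply/existsP; apply: contraNT u_neq0 => /existsPn u0.
  by apply/eqP/matrixP => a j; rewrite ord1 mxE; apply/eqP/negPn.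
exists (\row_j (if j == i then Num.sg (u ord0 i) else 0)); split.
  rewrite /zsqnorm (bigD1 i) //= big1 ?addr0 => [|j ji].
    by rewrite mxE eqxx sqr_sg ui0.
  by rewrite mxE (negPf ji) expr0n.
rewrite /zsqnorm (bigD1 i) //= [ltRHS](bigD1 i) //= !mxE eqxx.
rewrite (eq_bigr (fun j => u ord0 j ^+ 2)) => [|j ji]; last first.
  by rewrite !mxE (negPf ji) subr0.
rewrite ltrD2r; move: (u ord0 i) ui0 => a.
by case: (ltrgtP a 0) => // a_sgn _;
  [rewrite ltr0_sg | rewrite gtr0_sg] => //; rewrite !expr2; nia.
Qed.

Lemma znorm_split_unit u n : (0 < n)%N -> znorm R u <= n%:R ->
  exists v w, [/\ u = w + v, znorm R v < n%:R & znorm R w <= 1].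
Proof.
rewrite znorm_le_nat => n_gt0 u_le.
have [-> | u_neq0] := eqVneq u 0.
  by exists 0, 0; rewrite addr0 znorm_lt_nat znorm_le1 zsqnorm0; split=> //; lia.
have [w [w1 uw_lt]] := zsqnorm_unit_step u_neq0.
exists (u - w), w; rewrite addrC subrK znorm_lt_nat znorm_le1 w1.
by split=> //; lia.
Qed.

End IntegerNorm.

Section Separation.
Set Implicit Arguments.
Unset Strict Implicit.
Variables (R : realType) (X : metricType R) (k : nat).
Variables (T : 'rV[int]_k -> X -> X) (c : R).

Lemma sep_at_le (x y : X) (m n : nat) :
  (m <= n)%N -> sep_at T c x y m -> sep_at T c x y n.
Proof.
move=> mn [u [u_le sep]]; exists u; split=> //.
by apply: le_trans u_le _; rewrite ler_nat.
Qed.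

Lemma sep_at_shift (x y : X) (n : nat) :
  (forall u v x, T (u + v) x = T u (T v x)) -> (0 < n)%N ->
  sep_at T c x y n ->
  exists2 v, znorm R v < n%:R & sep_at T c (T v x) (T v y) 1.
Proof.
move=> T_add n_gt0 [u [u_le sep]].
have [v [w [uE v_lt w_le]]] := znorm_split_unit n_gt0 u_le.
by exists v => //; exists w; rewrite -!T_add -uE.
Qed.

Variables (alpha : R).
Hypothesis alpha_gt1 : 1 < alpha.

Let alpha_gt0 : 0 < alpha. Proof. exact: lt_trans alpha_gt1. Qed.

Lemma rho_ge_sep_at (x y : X) (m : nat) :
  sep_at T c x y m -> alpha ^- m <= rho T c alpha x y.
Proof.
move=> sep; rewrite /rho; case: pselect => [h|]; last by case; exists m.
case: ex_minnP => N _ /(_ m (asboolT sep)) Nm.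
by rewrite lef_pV2 ?posrE ?exprn_gt0 // ler_eXn2l.
Qed.

Lemma sep_at_rho_ge (x y : X) (n : nat) :
  alpha ^- n <= rho T c alpha x y -> sep_at T c x y n.
Proof.
rewrite /rho; case: pselect => [h|_]; last first.
  by rewrite leNgt invr_gt0 exprn_gt0.
case: ex_minnP => N /asboolP sep _ le_rho; apply: sep_at_le sep.
by move: le_rho; rewrite lef_pV2 ?posrE ?exprn_gt0 // ler_eXn2l.
Qed.

End Separation.

Theorem lemma4p4 (R : realType) (X : metricType R) (k : nat)
  (T : 'rV[int]_k -> X -> X) (c : R) (l : nat) (alpha : R) (D : X -> X -> R)
  (hX : compact [set: X]%classic)
  (hT : is_cont_action T)
  (hc : 0 < c)
  (hexp : forall x y : X, x <> y ->
     exists u : 'rV[int]_k, c < mdist (T u x) (T u y))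
  (hl : (0 < l)%N)
  (hl2 : forall x y : X, c / 2 <= mdist x y ->
     exists u : 'rV[int]_k, znorm R u <= l%:R /\ c <= mdist (T u x) (T u y))
  (halpha : 1 < alpha) (halpha_l : alpha ^+ l < 2)
  (hD : is_distance D)
  (hDrho : forall x y : X,
     rho T c alpha x y / 4 <= D x y /\ D x y <= rho T c alpha x y)
  (n : nat) (hn : (1 <= n)%N) (x y : X)
  (hmax : forall u : 'rV[int]_k, znorm R u < n%:R ->
     D (T u x) (T u y) < 1 / (4 * alpha)) :
  D x y < alpha ^- n.
Proof.
rewrite ltNge; apply/negP => Dxy_ge.
have sep_n := sep_at_rho_ge halpha (le_trans Dxy_ge (hDrho x y).2).
have [v v_lt sep_1] := sep_at_shift hT.2.1 hn sep_n.
have := hmax v v_lt; apply/negP; rewrite -leNgt.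
apply: le_trans (hDrho _ _).1.
have := rho_ge_sep_at halpha sep_1; rewrite expr1 => rho_ge.
rewrite mul1r invfM [_ * _]mulrC ler_wpM2r //.
Qed.
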